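(* In the two-block Spice setting, at any iteration $k$ (with $\mathsf{R}(u^k)>0$ and $\mathsf{R}(\bar u^k)>0$), $H_k=Q_kM_k^{-1}\succ0$ and $G_k=Q_k^\top+Q_k-M_k^\top H_kM_k\succ0$ (with $H_k$, $G_k$ equal to the explicit matrices given in the context), and $$\rho[\vartheta(u)-\vartheta(\bar u^k)]+(w-\bar w^k)^\top\tfrac{1}{\eta_k}\Gamma(\bar w^k)\ \ge\ \tfrac12\big(\|w-w^{k+1}\|_{H_k}^2-\|w-w^k\|_{H_k}^2\big)+\tfrac12\|\bar w^k-w^k\|_{G_k}^2\qquad\forall\,w\in\Omega .$$
   Context: Two-block Spice setting. Let $\mathcal{X}\subseteq\mathbb{R}^n$, $\mathcal{Y}\subseteq\mathbb{R}^m$ be nonempty closed convex sets; $f:\mathbb{R}^n\to\mathbb{R}$, $g:\mathbb{R}^m\to\mathbb{R}$ convex; $\phi_1,\dots,\phi_p:\mathbb{R}^n\to\mathbb{R}$ and $\psi_1,\dots,\psi_p:\mathbb{R}^m\to\mathbb{R}$ convex and continuously differentiable; $\Phi=(\phi_1,\dots,\phi_p)^\top$, $\Psi=(\psi_1,\dots,\psi_p)^\top$ with Jacobians $\mathcal{D}\Phi(x)\in\mathbb{R}^{p\times n}$, $\mathcal{D}\Psi(y)\in\mathbb{R}^{p\times m}$. Let $\mathcal{Z}=\mathbb{R}^p_+$, $\Omega=\mathcal{X}\times\mathcal{Y}\times\mathcal{Z}$, $u=(x,y)$, $w=(x,y,\lambda)$, $\vartheta(u)=f(x)+g(y)$, $\Gamma(w)=(\mathcal{D}\Phi(x)^\top\lambda,\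 \mathcal{D}\Psi(y)^\top\lambda,\ -\Phi(x)-\Psi(y))$. For symmetric $A$, $\|v\|_A^2:=v^\top Av$; matrix norms are spectral norms; $\mathsf{R}(u):=\|\mathcal{D}\Phi(x)\|^2+\|\mathcal{D}\Psi(y)\|^2$. Fix $\rho>0$, $\mu>1$, $w^0=(x^0,y^0,\lambda^0)\in\Omega$ and positive $\eta_0,\eta_1,\dots$. Given $w^k=(x^k,y^k,\lambda^k)$, iteration $k$ is: $r_k=\frac{1}{\eta_k}\sqrt{\mathsf{R}(u^k)}$; $\bar x^k=\arg\min_{x\in\mathcal{X}}\{\rho f(x)+\frac{1}{\eta_k}(\lambda^k)^\top\Phi(x)+\frac{r_k}{2}\|x-x^k\|^2\}$; $\bar y^k=\arg\min_{y\in\mathcal{Y}}\{\rho g(y)+\frac{1}{\eta_k}(\lambda^k)^\top\Psi(y)+\frac{r_k}{2}\|y-y^k\|^2\}$; $\bar u^k=(\bar x^k,\bar y^k)$; $s_k=\frac{\mu\mathsf{R}(\bar u^k)}{\eta_k\sqrt{\mathsf{R}(u^k)}}$; $\bar\lambda^k=\arg\max_{\lambda\in\mathcal{Z}}\{\frac{1}{\eta_k}\lambda^\top[\Phi(\bar x^k)+\Psi(\bar y^k)]-\frac{s_k}{2}\|\lambda-\lambda^k\|^2\}=\max\{\lambda^k+\frac{1}{\eta_ks_k}(\Phi(\bar x^k)+\Psi(\bar y^k)),0\}$; $\bar w^k=(\bar x^k,\bar y^k,\bar\lambda^k)$; $w^{k+1}=w^k-M_k(w^k-\bar w^k)$ with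 $M_k=\begin{pmatrix}I_n&0&-\frac{1}{\eta_kr_k}\mathcal{D}\Phi(\bar x^k)^\top\\0&I_m&-\frac{1}{\eta_kr_k}\mathcal{D}\Psi(\bar y^k)^\top\\0&0&I_p\end{pmatrix}$. It is assumed that $\mathsf{R}(u^k)>0$, $\mathsf{R}(\bar u^k)>0$ for all $k$. Define $Q_k=\begin{pmatrix}r_kI_n&0&-\frac{1}{\eta_k}\mathcal{D}\Phi(\bar x^k)^\top\\0&r_kI_m&-\frac{1}{\eta_k}\mathcal{D}\Psi(\bar y^k)^\top\\0&0&s_kI_p\end{pmatrix}$, $H_k=\mathrm{diag}(r_kI_n,r_kI_m,s_kI_p)$, $G_k=\mathrm{diag}\big(r_kI_n,\ r_kI_m,\ s_kI_p-\frac{1}{\eta_k^2r_k}[\mathcal{D}\Phi(\bar x^k)\mathcal{D}\Phi(\bar x^k)^\top+\mathcal{D}\Psi(\bar y^k)\mathcal{D}\Psi(\bar y^k)^\top]\big)$. *)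

From HB Require Import structures.
From mathcomp Require Import all_boot all_order all_algebra.
From mathcomp Require Import all_classical all_reals all_analysis.
Set Implicit Arguments. Unset Strict Implicit. Unset Printing Implicit Defensive.
Import Order.TTheory GRing.Theory Num.Theory.
Import numFieldNormedType.Exports.
Local Open Scope classical_set_scope.
Local Open Scope ring_scope.

Definition jac (R : realType) (n p : nat) (phi : 'I_p -> 'cV[R]_n -> R)
  (x : 'cV[R]_n) : 'M[R]_(p, n) :=
  \matrix_(i < p, j < n) ('d (phi i) x (delta_mx j 0 : 'cV[R]_n) : R).

Definition convex_C1 (R : realType) (n p : nat) (phi : 'I_p -> 'cV[R]_n -> R)
  : Prop :=
  (forall i, convex_function setT (phi i)) /\
  (forall i x, differentiable (phi i) x) /\
  (forall i j, continuous (fun x => jac phi x i j)).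

Definition vfun (R : realType) (n p : nat) (phi : 'I_p -> 'cV[R]_n -> R)
  (x : 'cV[R]_n) : 'cV[R]_p := \col_(i < p) phi i x.

Definition enorm (R : realType) (n : nat) (v : 'cV[R]_n) : R :=
  Num.sqrt (\sum_(i < n) v i 0 ^+ 2).

Definition specnorm (R : realType) (p n : nat) (A : 'M[R]_(p, n)) : R :=
  sup [set enorm (A *m v) | v in [set v : 'cV[R]_n | enorm v <= 1]].

Definition qf (R : realType) (N : nat) (A : 'M[R]_N) (v : 'cV[R]_N) : R :=
  (v^T *m A *m v) 0 0.

Definition posdef (R : realType) (N : nat) (A : 'M[R]_N) : Prop :=
  A^T = A /\ forall v : 'cV[R]_N, v != 0 -> 0 < qf A v.

Definition wvec (R : realType) (n m p : nat) (x : 'cV[R]_n) (y : 'cV[R]_m)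
  (l : 'cV[R]_p) : 'cV[R]_(n + m + p) := col_mx (col_mx x y) l.

Definition nonneg (R : realType) (p : nat) (l : 'cV[R]_p) : Prop :=
  forall i, 0 <= l i 0.

Definition Rfun (R : realType) (n m p : nat) (phi : 'I_p -> 'cV[R]_n -> R)
  (psi : 'I_p -> 'cV[R]_m -> R) (x : 'cV[R]_n) (y : 'cV[R]_m) : R :=
  specnorm (jac phi x) ^+ 2 + specnorm (jac psi y) ^+ 2.

Definition Gamma (R : realType) (n m p : nat) (phi : 'I_p -> 'cV[R]_n -> R)
  (psi : 'I_p -> 'cV[R]_m -> R) (x : 'cV[R]_n) (y : 'cV[R]_m) (l : 'cV[R]_p)
  : 'cV[R]_(n + m + p) :=
  wvec ((jac phi x)^T *m l) ((jac psi y)^T *m l) (- vfun phi x - vfun psi y).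

(* M_k, Q_k, H_k, G_k, block form with blocks of sizes n, m, p;
   JX = DPhi(xbar^k), JY = DPsi(ybar^k) *)
Definition Mmat (R : realType) (n m p : nat) (eta r : R)
  (JX : 'M[R]_(p, n)) (JY : 'M[R]_(p, m)) : 'M[R]_(n + m + p) :=
  block_mx (block_mx 1%:M 0 0 1%:M) (- (eta * r)^-1 *: col_mx JX^T JY^T)
           0 1%:M.

Definition Qmat (R : realType) (n m p : nat) (eta r s : R)
  (JX : 'M[R]_(p, n)) (JY : 'M[R]_(p, m)) : 'M[R]_(n + m + p) :=
  block_mx (block_mx (r%:M) 0 0 (r%:M)) (- eta^-1 *: col_mx JX^T JY^T)
           0 (s%:M).

Definition Hmat (R : realType) (n m p : nat) (r s : R) : 'M[R]_(n + m + p) :=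
  block_mx (block_mx (r%:M) 0 0 (r%:M)) 0 0 (s%:M).

Definition Gmat (R : realType) (n m p : nat) (eta r s : R)
  (JX : 'M[R]_(p, n)) (JY : 'M[R]_(p, m)) : 'M[R]_(n + m + p) :=
  block_mx (block_mx (r%:M) 0 0 (r%:M)) 0 0
    (s%:M - (eta ^+ 2 * r)^-1 *: (JX *m JX^T + JY *m JY^T)).

From HB Require Import structures.
From mathcomp Require Import all_boot all_order all_algebra.
From mathcomp Require Import all_classical all_reals all_analysis.
From mathcomp Require Import ring lra.
Import Order.TTheory GRing.Theory Num.Theory.
Import numFieldNormedType.Exports.
Local Open Scope classical_set_scope.
Local Open Scope ring_scope.
Set Implicit Arguments. Unset Strict Implicit. Unset Printing Implicit Defensive.

(* With Q_k = H_k M_k and H_k symmetric, the correction w^{k+1} = w^k - M_k (w^k - wbar^k)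
   turns the right-hand side, by polarization, into exactly
   (w - wbar^k)^T Q_k (w^k - wbar^k).  Blockwise, the inequality then becomes the
   first-order optimality conditions of the two proximal subproblems, in which the
   constraint functions enter linearly through lambda^k and the difference
   lambda^k - lambdabar^k is compensated by the off-diagonal blocks of Q_k, together
   with the obtuse-angle property of the projection onto R^p_+ defining lambdabar^k.
   G_k is block diagonal, and its last block is positive definite because
   ||DPhi||^2 + ||DPsi||^2 = R(ubar^k) is strictly smaller than mu R(ubar^k). *)

Section InnerProduct.
Variable R : realType.

Definition dot k (a b : 'cV[R]_k) : R := (a^T *m b) 0 0.

Lemma dotE k (a b : 'cV[R]_k) : dot a b = \sum_i a i 0 * b i 0.
Proof. by rewrite /dot !mxE; apply: eq_bigr => i _; rewrite mxE. Qed.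

Lemma dotC k (a b : 'cV[R]_k) : dot a b = dot b a.
Proof. by rewrite !dotE; apply: eq_bigr => i _; rewrite mulrC. Qed.

Lemma dotDl k (a b c : 'cV[R]_k) : dot (a + b) c = dot a c + dot b c.
Proof. by rewrite /dot linearD /= mulmxDl mxE. Qed.

Lemma dotDr k (a b c : 'cV[R]_k) : dot c (a + b) = dot c a + dot c b.
Proof. by rewrite dotC dotDl !(dotC c). Qed.

Lemma dotZl k x (a c : 'cV[R]_k) : dot (x *: a) c = x * dot a c.
Proof. by rewrite /dot linearZ /= -scalemxAl mxE. Qed.

Lemma dotZr k x (a c : 'cV[R]_k) : dot c (x *: a) = x * dot c a.
Proof. by rewrite dotC dotZl dotC. Qed.

Lemma dotNl k (a c : 'cV[R]_k) : dot (- a) c = - dot a c.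
Proof. by rewrite -scaleN1r dotZl mulN1r. Qed.

Lemma dotNr k (a c : 'cV[R]_k) : dot c (- a) = - dot c a.
Proof. by rewrite dotC dotNl dotC. Qed.

Lemma dotBl k (a b c : 'cV[R]_k) : dot (a - b) c = dot a c - dot b c.
Proof. by rewrite dotDl dotNl. Qed.

Lemma dotBr k (a b c : 'cV[R]_k) : dot c (a - b) = dot c a - dot c b.
Proof. by rewrite dotDr dotNr. Qed.

Definition dot_bilinE := (dotDl, dotDr, dotBl, dotBr, dotNl, dotNr, dotZl, dotZr).

Lemma dot_trmx k l (A : 'M[R]_(k, l)) (a : 'cV[R]_l) (b : 'cV[R]_k) :
  dot (A *m a) b = dot a (A^T *m b).
Proof. by rewrite /dot trmx_mul mulmxA. Qed.

Lemma dotvv_ge0 k (a : 'cV[R]_k) : 0 <= dot a a.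
Proof. by rewrite dotE sumr_ge0 // => i _; rewrite -expr2 sqr_ge0. Qed.

Lemma dotvv_eq0 k (a : 'cV[R]_k) : (dot a a == 0) = (a == 0).
Proof.
apply/eqP/eqP => [|->]; last by rewrite /dot mulmx0 mxE.
rewrite dotE => /psumr_eq0P a0; apply/matrixP => i j; rewrite ord1 mxE.
by apply/eqP; rewrite -sqrf_eq0 expr2 a0 // => l _; rewrite -expr2 sqr_ge0.
Qed.

Lemma dotvv_gt0 k (a : 'cV[R]_k) : a != 0 -> 0 < dot a a.
Proof. by rewrite lt0r dotvv_ge0 dotvv_eq0 andbT. Qed.

Lemma enorm_ge0 k (a : 'cV[R]_k) : 0 <= enorm a.
Proof. exact: sqrtr_ge0. Qed.

Lemma enorm_sq k (a : 'cV[R]_k) : enorm a ^+ 2 = dot a a.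
Proof.
rewrite /enorm sqr_sqrtr; last by apply: sumr_ge0 => i _; rewrite sqr_ge0.
by rewrite dotE; apply: eq_bigr => i _; rewrite expr2.
Qed.

Lemma enorm_eq0 k (a : 'cV[R]_k) : (enorm a == 0) = (a == 0).
Proof. by rewrite -dotvv_eq0 -enorm_sq sqrf_eq0. Qed.

Lemma enorm0 k : enorm (0 : 'cV[R]_k) = 0.
Proof. by apply/eqP; rewrite enorm_eq0. Qed.

Lemma enormZ k c (a : 'cV[R]_k) : enorm (c *: a) = `|c| * enorm a.
Proof.
apply: (@pexpIrn _ 2) => //; rewrite ?nnegrE ?mulr_ge0 ?enorm_ge0 //.
by rewrite exprMn !enorm_sq dotZl dotZr real_normK ?num_real // mulrA expr2.
Qed.

Lemma enormN k (a : 'cV[R]_k) : enorm (- a) = enorm a.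
Proof. by rewrite -scaleN1r enormZ normrN1 mul1r. Qed.

Lemma cauchy_schwarz k (a b : 'cV[R]_k) : dot a b <= enorm a * enorm b.
Proof.
have [/eqP|a0] := eqVneq (enorm a) 0.
  by rewrite enorm_eq0 => /eqP->; rewrite /dot trmx0 mul0mx mxE enorm0 mul0r.
have [/eqP|b0] := eqVneq (enorm b) 0.
  by rewrite enorm_eq0 => /eqP->; rewrite /dot mulmx0 mxE enorm0 mulr0.
have ab_gt0 : 0 < enorm a * enorm b by rewrite mulr_gt0 // lt0r ?a0 ?b0 enorm_ge0.
have := dotvv_ge0 (enorm b *: a - enorm a *: b).
rewrite !dot_bilinE -!enorm_sq (dotC b a) => h.
have : 0 <= 2 * (enorm a * enorm b) * (enorm a * enorm b - dot a b) by nra.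
by rewrite pmulr_rge0 ?subr_ge0 // mulr_gt0.
Qed.

End InnerProduct.

Section SpectralNorm.
Variable R : realType.
Variables k l : nat.
Implicit Type A : 'M[R]_(k, l).

Lemma specnorm_has_ubound A :
  has_ubound [set enorm (A *m v) | v in [set v : 'cV[R]_l | enorm v <= 1]].
Proof.
exists (Num.sqrt (\sum_i enorm (row i A)^T ^+ 2)) => _ [v /= v_le1 <-].
rewrite /enorm; apply: ler_wsqrtr; apply: ler_sum => i _.
have rowE : (A *m v) i 0 = dot (row i A)^T v.
  by rewrite dotE mxE; apply: eq_bigr => j _; rewrite !mxE.
have cs := cauchy_schwarz (row i A)^T v.
have csN := cauchy_schwarz (- (row i A)^T) v.
rewrite dotNl enormN in csN.
have r_ge0 := enorm_ge0 (row i A)^T; have := enorm_ge0 v.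
have : enorm (row i A)^T * enorm v <= enorm (row i A)^T by nra.
rewrite rowE -/(enorm _); nra.
Qed.

Lemma specnorm_ge0 A : 0 <= specnorm A.
Proof.
apply: (ub_le_sup (specnorm_has_ubound A)).
by exists 0; rewrite /= ?mulmx0 enorm0.
Qed.

Lemma enorm_mulmx_le A u : enorm (A *m u) <= specnorm A * enorm u.
Proof.
have [/eqP|u0] := eqVneq (enorm u) 0.
  by rewrite enorm_eq0 => /eqP->; rewrite mulmx0 !enorm0 mulr0.
have u_gt0 : 0 < enorm u by rewrite lt0r u0 enorm_ge0.
have : enorm (A *m ((enorm u)^-1 *: u)) <= specnorm A.
  apply: (ub_le_sup (specnorm_has_ubound A)); exists ((enorm u)^-1 *: u) => //=.
  by rewrite enormZ ger0_norm ?invr_ge0 ?enorm_ge0 // mulVf.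
rewrite -scalemxAr enormZ ger0_norm ?invr_ge0 ?enorm_ge0 //.
by rewrite ler_pdivrMl // mulrC.
Qed.

(* From ||A^T v||^2 = <A A^T v, v> <= ||A|| ||A^T v|| ||v||. *)
Lemma dot_trmx_mul_le A (v : 'cV[R]_k) :
  dot (A^T *m v) (A^T *m v) <= specnorm A ^+ 2 * dot v v.
Proof.
set u := A^T *m v.
have uu_le : dot u u <= enorm v * (specnorm A * enorm u).
  rewrite {1}/u dot_trmx trmxK; apply: le_trans (cauchy_schwarz _ _) _.
  by apply: ler_wpM2l; [exact: enorm_ge0 | exact: enorm_mulmx_le].
rewrite -!enorm_sq -exprMn; rewrite -enorm_sq in uu_le.
have u_ge0 := enorm_ge0 u; have := enorm_ge0 v; have := specnorm_ge0 A.
have [u0|u_gt0] := eqVneq (enorm u) 0; first by rewrite u0 expr0n /= => *; nra.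
nra.
Qed.

End SpectralNorm.

Section CorrectionStep.
Variables (R : realType) (N : nat).
Implicit Types (A H M : 'M[R]_N) (v w wk wb : 'cV[R]_N).

Lemma qf_dot A v : qf A v = dot v (A *m v).
Proof. by rewrite /qf /dot mulmxA. Qed.

Lemma qfN A v : qf A (- v) = qf A v.
Proof. by rewrite !qf_dot mulmxN dotNl dotNr opprK. Qed.

Lemma correction_step_identity H M w wk wb : H^T = H ->
  let Q := H *m M in
  1 / 2 * (qf H (w - (wk - M *m (wk - wb))) - qf H (w - wk))
  + 1 / 2 * qf (Q^T + Q - M^T *m H *m M) (wb - wk)
  = dot (w - wb) (Q *m (wk - wb)).
Proof.
move=> Hsym Q; set a := w - wk; set v := wk - wb.
have -> : w - (wk - M *m v) = a + M *m v by rewrite opprB addrCA addrC.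
have -> : wb - wk = - v by rewrite opprB.
have -> : w - wb = a + v by rewrite addrA subrK.
have cross : dot (M *m v) (H *m a) = dot a (Q *m v).
  by rewrite dotC dot_trmx Hsym mulmxA.
have sym : dot v (Q^T *m v) = dot v (Q *m v) by rewrite -dot_trmx dotC.
have MHM : dot v (M^T *m H *m M *m v) = dot (M *m v) (Q *m v).
  by rewrite -!mulmxA -dot_trmx mulmxA.
clearbody a v; rewrite qfN !qf_dot !(mulmxDl, mulmxBl, mulmxDr) !dot_bilinE.
rewrite mulNmx dotNr cross sym !mulmxA -/Q MHM.
lra.
Qed.

End CorrectionStep.

Section BlockMatrices.
Variables (R : realType) (n m p : nat).
Implicit Types (a : 'cV[R]_n) (b : 'cV[R]_m) (c : 'cV[R]_p).
Implicit Types (JX : 'M[R]_(p, n)) (JY : 'M[R]_(p, m)) (eta r s : R).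

Lemma wvecB a a' b b' c c' :
  wvec a b c - wvec a' b' c' = wvec (a - a') (b - b') (c - c').
Proof. by rewrite /wvec !opp_col_mx !add_col_mx. Qed.

Lemma wvecZ (e : R) a b c : e *: wvec a b c = wvec (e *: a) (e *: b) (e *: c).
Proof. by rewrite /wvec !scale_col_mx. Qed.

Lemma dot_wvec a a' b b' c c' :
  dot (wvec a b c) (wvec a' b' c') = dot a a' + dot b b' + dot c c'.
Proof. by rewrite /dot /wvec !tr_col_mx !mul_row_col !mxE. Qed.

Lemma wvecK (v : 'cV[R]_(n + m + p)) :
  v = wvec (usubmx (usubmx v)) (dsubmx (usubmx v)) (dsubmx v).
Proof. by rewrite /wvec !vsubmxK. Qed.

Lemma wvec_neq0_dot_gt0 a b c : wvec a b c != 0 ->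
  [\/ 0 < dot a a, 0 < dot b b | 0 < dot c c].
Proof.
have [-> | /dotvv_gt0] := eqVneq a 0; last by constructor 1.
have [-> | /dotvv_gt0] := eqVneq b 0; last by constructor 2.
have [-> | /dotvv_gt0] := eqVneq c 0; last by constructor 3.
by rewrite /wvec !col_mx0 eqxx.
Qed.

Lemma Hmat_mul r s a b c :
  Hmat n m p r s *m wvec a b c = wvec (r *: a) (r *: b) (s *: c).
Proof. by rewrite /Hmat /wvec !mul_block_col !mul0mx !addr0 !add0r !mul_scalar_mx. Qed.

Lemma qf_Hmat r s a b c :
  qf (Hmat n m p r s) (wvec a b c) = r * dot a a + r * dot b b + s * dot c c.
Proof. by rewrite qf_dot Hmat_mul dot_wvec !dotZr. Qed.

Lemma Qmat_mul eta r s JX JY a b c :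
  Qmat eta r s JX JY *m wvec a b c =
  wvec (r *: a - eta^-1 *: (JX^T *m c)) (r *: b - eta^-1 *: (JY^T *m c)) (s *: c).
Proof.
rewrite /Qmat /wvec !mul_block_col !mul0mx !addr0 !add0r !mul_scalar_mx.
by rewrite -scalemxAl mul_col_mx scale_col_mx add_col_mx !scaleNr.
Qed.

Lemma qf_Gmat eta r s JX JY a b c :
  qf (Gmat eta r s JX JY) (wvec a b c) =
  r * dot a a + r * dot b b + s * dot c c
  - (eta ^+ 2 * r)^-1 * (dot (JX^T *m c) (JX^T *m c) + dot (JY^T *m c) (JY^T *m c)).
Proof.
rewrite qf_dot /Gmat /wvec !mul_block_col !mul0mx !addr0 !add0r !mul_scalar_mx.
rewrite mulmxBl mul_scalar_mx -scalemxAl mulmxDl -/(wvec _ _ _) dot_wvec.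
by rewrite !dot_bilinE -!mulmxA -!dot_trmx !(dotC c); ring.
Qed.

Lemma Mmat_unit eta r JX JY : Mmat eta r JX JY \in unitmx.
Proof. by rewrite unitmxE /Mmat det_ublock -scalar_mx_block !det1 mulr1 unitr1. Qed.

Lemma Qmat_HM eta r s JX JY : r != 0 ->
  Qmat eta r s JX JY = Hmat n m p r s *m Mmat eta r JX JY.
Proof.
move=> r0; rewrite /Qmat /Hmat /Mmat -!scalar_mx_block mulmx_block.
rewrite !mul0mx !mulmx0 !addr0 !add0r !mulmx1 mul_scalar_mx scalerA.
by congr block_mx; congr (_ *: _); rewrite mulrN invfM mulrCA mulfV // mulr1.
Qed.

Lemma Gmat_correction eta r s JX JY : r != 0 -> eta != 0 ->
  let M := Mmat eta r JX JY in let Q := Qmat eta r s JX JY in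
  Q^T + Q - M^T *m Hmat n m p r s *m M = Gmat eta r s JX JY.
Proof.
move=> r0 e0 M Q.
rewrite /M /Q /Qmat /Hmat /Mmat /Gmat -!scalar_mx_block !tr_block_mx !trmx0.
rewrite !tr_scalar_mx !mulmx_block !mul0mx !mulmx0 !addr0 !add0r ?mulmx1 ?mul1mx.
rewrite !add_block_mx opp_block_mx add_block_mx.
have re : r * (eta * r)^-1 = eta^-1 by rewrite invfM mulrCA mulfV // mulr1.
congr block_mx.
- by rewrite addrK.
- by rewrite add0r addr0 mul_scalar_mx scalerA mulrN re subrr.
- rewrite addr0 mul_mx_scalar !linearZ /= scalerA mulrN re scalerN !scaleNr opprK.
  by rewrite addNr.
- rewrite mul_mx_scalar !linearZ /= -!scalemxAl !scalerA tr_col_mx !trmxK mul_row_col.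
  rewrite [_ *: _ + s%:M]addrC opprD addrA addrK scalerN; congr (_ - _ *: _).
  by field; rewrite r0 e0.
Qed.

Lemma Hmat_posdef r s : 0 < r -> 0 < s -> posdef (Hmat n m p r s).
Proof.
move=> r0 s0; split; first by rewrite /Hmat !tr_block_mx !trmx0 !tr_scalar_mx.
move=> v; rewrite [v]wvecK qf_Hmat => /wvec_neq0_dot_gt0.
have := dotvv_ge0 (usubmx (usubmx v)); have := dotvv_ge0 (dsubmx (usubmx v)).
have := dotvv_ge0 (dsubmx v).
by move=> ? ? ?; case=> ?; nra.
Qed.

Lemma Gmat_posdef eta r s JX JY : 0 < r -> 0 < eta ->
  (eta ^+ 2 * r)^-1 * (specnorm JX ^+ 2 + specnorm JY ^+ 2) < s ->
  posdef (Gmat eta r s JX JY).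
Proof.
move=> r0 e0 s_gt; split.
  rewrite /Gmat !tr_block_mx !trmx0 !tr_scalar_mx linearB /= linearZ /= linearD /=.
  by rewrite !trmx_mul !trmxK tr_scalar_mx.
move=> v; rewrite [v]wvecK qf_Gmat => /wvec_neq0_dot_gt0.
set a := usubmx _; set b := dsubmx (usubmx v); set c := dsubmx v.
have k_gt0 : 0 < (eta ^+ 2 * r)^-1 by rewrite invr_gt0 mulr_gt0 // exprn_gt0.
set k := (eta ^+ 2 * r)^-1 in k_gt0 s_gt *.
have JTc_le : k * (dot (JX^T *m c) (JX^T *m c) + dot (JY^T *m c) (JY^T *m c))
              <= k * (specnorm JX ^+ 2 + specnorm JY ^+ 2) * dot c c.
  rewrite -mulrA ler_wpM2l ?(ltW k_gt0) // mulrDl.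
  by apply: lerD; apply: dot_trmx_mul_le.
have := dotvv_ge0 a; have := dotvv_ge0 b; have := dotvv_ge0 c.
by move=> ? ? ?; case=> ?; nra.
Qed.

End BlockMatrices.

Section ProximalStep.
Variables (R : realType) (n : nat) (X : set 'cV[R]_n) (f F : 'cV[R]_n -> R).
Variables (rho r : R) (xs xb : 'cV[R]_n).
Hypotheses (convX : convex_set X) (convf : convex_function setT f).
Hypotheses (rho_ge0 : 0 <= rho) (Xxb : X xb).
Hypothesis xb_min : forall x, X x ->
  rho * f xb + F xb + r / 2 * enorm (xb - xs) ^+ 2
  <= rho * f x + F x + r / 2 * enorm (x - xs) ^+ 2.

Lemma prox_segment_ge0 x h : X x -> 0 < h -> h < 1 ->
  0 <= h * (rho * (f x - f xb) + r * dot (x - xb) (xb - xs))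
       + (F (h *: (x - xb) + xb) - F xb) + r / 2 * h ^+ 2 * dot (x - xb) (x - xb).
Proof.
move=> Xx h_gt0 h_lt1; set d := x - xb.
pose t := Itv01 (ltW h_gt0) (ltW h_lt1).
have zE : h *: d + xb = conv t (x : convex_lmodType 'cV[R]_n) xb :> 'cV[R]_n.
  transitivity (h *: x + (1 - h) *: xb); last by [].
  by apply/matrixP => i j; rewrite !mxE; ring.
have Xz : X (h *: d + xb).
  by rewrite zE; apply: set_mem; apply: convX; apply: mem_set.
have fz : f (h *: d + xb) <= h * f x + (1 - h) * f xb.
  by rewrite zE; apply: convf; rewrite inE.
have rho_fz : rho * f (h *: d + xb) <= rho * (h * f x + (1 - h) * f xb).
  exact: ler_wpM2l.
have := xb_min Xz; rewrite -[h *: d + xb - xs]addrA !enorm_sq; clearbody d.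
move: (xb - xs) => e; rewrite !dot_bilinE (dotC e d) => z_ge.
nra.
Qed.

Lemma prox_optimality x L : X x ->
  (fun h => h^-1 * (F (h *: (x - xb) + xb) - F xb)) @ 0^'+ --> L ->
  0 <= rho * (f x - f xb) + L + r * dot (x - xb) (xb - xs).
Proof.
move=> Xx dF; set d := x - xb.
pose G h := rho * (f x - f xb) + h^-1 * (F (h *: d + xb) - F xb)
            + r * dot d (xb - xs) + r / 2 * dot d d * h.
have GL : G h @[h --> 0^'+] -->
          rho * (f x - f xb) + L + r * dot d (xb - xs) + r / 2 * dot d d * 0.
  apply: cvgD; first apply: cvgD; first apply: cvgD.
  - exact: cvg_cst.
  - exact: dF.
  - exact: cvg_cst.
  - by apply: cvgMl_tmp; apply: cvg_at_right_filter; exact: cvg_id.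
rewrite -[leRHS]addr0 -[X in _ + X](mulr0 (r / 2 * dot d d)).
apply: (cvgr_to_ge GL); near=> h.
have h_gt0 : 0 < h by near: h; exact: nbhs_right_gt.
have h_lt1 : h < 1 by near: h; exact: nbhs_right_lt.
rewrite -(pmulr_rge0 _ h_gt0).
have -> : h * G h = h * (rho * (f x - f xb) + r * dot d (xb - xs))
                    + (F (h *: d + xb) - F xb) + r / 2 * h ^+ 2 * dot d d.
  by rewrite /G; field; exact: lt0r_neq0.
exact: prox_segment_ge0.
Unshelve. all: by end_near.
Qed.

End ProximalStep.

Lemma jac_mulmx (R : realType) n p (phi : 'I_p -> 'cV[R]_n -> R) x d i :
  (jac phi x *m d) i 0 = 'd (phi i) x d.
Proof.
rewrite mxE {2}(matrix_sum_delta d) linear_sum; apply: eq_bigr => j _.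
by rewrite big_ord1 linearZ /= !mxE mulrC.
Qed.

Section Linearization.
Variables (R : realType) (n p : nat) (phi : 'I_p -> 'cV[R]_n -> R).

Lemma dot_jac x d (l : 'cV[R]_p) :
  dot d ((jac phi x)^T *m l) = \sum_i l i 0 * 'd (phi i) x d.
Proof. by rewrite -dot_trmx dotC dotE; apply: eq_bigr => i _; rewrite jac_mulmx. Qed.

Lemma lincomb_dir_deriv (l : 'cV[R]_p) xb d :
  (forall i, differentiable (phi i) xb) ->
  (fun h => h^-1 * ((l^T *m vfun phi (h *: d + xb)) 0 0 - (l^T *m vfun phi xb) 0 0))
    @ 0^'+ --> dot d ((jac phi xb)^T *m l).
Proof.
move=> dphi; rewrite dot_jac.
have lE z : (l^T *m vfun phi z) 0 0 = \sum_i l i 0 * phi i z.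
  by rewrite !mxE; apply: eq_bigr => i _; rewrite !mxE.
under eq_fun do rewrite !lE -sumrB mulr_sumr.
apply: cvg_big => [|i _]; first exact: add_continuous.
under eq_fun do rewrite -mulrBr mulrCA.
apply: cvgMl_tmp; rewrite -deriveE //.
by apply: cvg_dnbhs_at_right; exact: diff_derivable.
Qed.

Lemma linearized_prox_vi (X : set 'cV[R]_n) (f : 'cV[R]_n -> R) (rho c r : R)
    (l : 'cV[R]_p) (xs xb : 'cV[R]_n) :
  convex_set X -> convex_function setT f ->
  (forall i, differentiable (phi i) xb) -> 0 <= rho -> X xb ->
  (forall x, X x ->
     rho * f xb + c * (l^T *m vfun phi xb) 0 0 + r / 2 * enorm (xb - xs) ^+ 2
     <= rho * f x + c * (l^T *m vfun phi x) 0 0 + r / 2 * enorm (x - xs) ^+ 2) ->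
  forall x, X x ->
  0 <= rho * (f x - f xb) + c * dot (x - xb) ((jac phi xb)^T *m l)
       + r * dot (x - xb) (xb - xs).
Proof.
move=> convX convf dphi rho_ge0 Xxb xb_min x Xx.
apply: (prox_optimality (F := fun z => c * (l^T *m vfun phi z) 0 0)
          convX convf rho_ge0 Xxb xb_min Xx).
under eq_fun do rewrite -mulrBr mulrCA.
by apply: cvgMl_tmp; exact: lincomb_dir_deriv.
Qed.

End Linearization.

Lemma orthant_proj_vi (R : realType) p (v l : 'cV[R]_p) : nonneg l ->
  dot (l - \col_i Num.max (v i 0) 0) (v - \col_i Num.max (v i 0) 0) <= 0.
Proof.
move=> l_ge0; rewrite dotE sumr_le0 // => i _; rewrite !mxE.
have [v_le0 | v_gt0] := lerP (v i 0) 0.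
  by rewrite !subr0 mulr_ge0_le0.
by rewrite subrr mulr0.
Qed.

Lemma dual_step_vi (R : realType) p (eta s : R) (l lk lb a b : 'cV[R]_p) :
  0 < eta -> 0 < s -> nonneg l ->
  lb = \col_i Num.max (lk i 0 + (eta * s)^-1 * (a + b) i 0) 0 ->
  s * dot (l - lb) (lk - lb) <= dot (l - lb) (eta^-1 *: (- a - b)).
Proof.
move=> eta_gt0 s_gt0 l_ge0 lbE.
have := orthant_proj_vi (lk + (eta * s)^-1 *: (a + b)) l_ge0.
have -> : \col_i Num.max ((lk + (eta * s)^-1 *: (a + b)) i 0) 0 = lb.
  by rewrite lbE; apply/matrixP => i j; rewrite !mxE.
have -> : eta^-1 = s * (eta * s)^-1 by rewrite invfM mulrCA mulfV ?gt_eqF // mulr1.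
rewrite -scalerA dotZr => proj_le0.
rewrite -subr_ge0 -mulrBr pmulr_rge0 //.
by move: proj_le0; rewrite !dot_bilinE; lra.
Qed.

Lemma primal_step_residual (R : realType) k p (J : 'M[R]_(p, k)) (e r : R)
    (x xb xk : 'cV[R]_k) (lk lb : 'cV[R]_p) :
  dot (x - xb) (e *: (J^T *m lb))
  - dot (x - xb) (r *: (xk - xb) - e *: (J^T *m (lk - lb)))
  = e * dot (x - xb) (J^T *m lk) + r * dot (x - xb) (xb - xk).
Proof. by rewrite mulmxBr !dot_bilinE; ring. Qed.

Lemma spice_dual_step_large (R : realType) (eta mu Ru Rb : R) :
  0 < eta -> 1 < mu -> 0 < Ru -> 0 < Rb ->
  (eta ^+ 2 * (eta^-1 * Num.sqrt Ru))^-1 * Rb < mu * Rb / (eta * Num.sqrt Ru).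
Proof.
move=> eta_gt0 mu_gt1 Ru_gt0 Rb_gt0.
have sqrt_gt0 : 0 < Num.sqrt Ru by rewrite sqrtr_gt0.
have -> : eta ^+ 2 * (eta^-1 * Num.sqrt Ru) = eta * Num.sqrt Ru.
  by field; rewrite gt_eqF.
by rewrite [_^-1 * Rb]mulrC -mulrA ltr_pMl // mulr_gt0 // invr_gt0 mulr_gt0.
Qed.

Unset Implicit Arguments.

Theorem lemma4p2 (R : realType) (n m p : nat)
  (X : set 'cV[R]_n) (Y : set 'cV[R]_m)
  (f : 'cV[R]_n -> R) (g : 'cV[R]_m -> R)
  (phi : 'I_p -> 'cV[R]_n -> R) (psi : 'I_p -> 'cV[R]_m -> R)
  (rho mu : R) (eta : nat -> R)
  (xs xb : nat -> 'cV[R]_n) (ys yb : nat -> 'cV[R]_m)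
  (ls lb : nat -> 'cV[R]_p) :
  X !=set0 -> closed X -> convex_set X ->
  Y !=set0 -> closed Y -> convex_set Y ->
  convex_function setT f -> convex_function setT g ->
  convex_C1 phi -> convex_C1 psi ->
  0 < rho -> 1 < mu -> (forall k, 0 < eta k) ->
  (* w^0 in Omega *)
  X (xs 0%N) -> Y (ys 0%N) -> nonneg (ls 0%N) ->
  (* standing assumption R(u^k) > 0, R(ubar^k) > 0 *)
  (forall k, 0 < Rfun phi psi (xs k) (ys k)) ->
  (forall k, 0 < Rfun phi psi (xb k) (yb k)) ->
  let r k := (eta k)^-1 * Num.sqrt (Rfun phi psi (xs k) (ys k)) in
  let s k := mu * Rfun phi psi (xb k) (yb k)
             / (eta k * Num.sqrt (Rfun phi psi (xs k) (ys k))) in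
  (* xbar^k = argmin over X *)
  (forall k, X (xb k) /\ forall x, X x ->
     rho * f (xb k) + (eta k)^-1 * ((ls k)^T *m vfun phi (xb k)) 0 0
       + r k / 2 * enorm (xb k - xs k) ^+ 2
     <= rho * f x + (eta k)^-1 * ((ls k)^T *m vfun phi x) 0 0
       + r k / 2 * enorm (x - xs k) ^+ 2) ->
  (* ybar^k = argmin over Y *)
  (forall k, Y (yb k) /\ forall y, Y y ->
     rho * g (yb k) + (eta k)^-1 * ((ls k)^T *m vfun psi (yb k)) 0 0
       + r k / 2 * enorm (yb k - ys k) ^+ 2
     <= rho * g y + (eta k)^-1 * ((ls k)^T *m vfun psi y) 0 0
       + r k / 2 * enorm (y - ys k) ^+ 2) ->
  (* lambdabar^k *)
  (forall k, lb k = \col_(i < p) Num.max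
     (ls k i 0 + (eta k * s k)^-1
        * (vfun phi (xb k) + vfun psi (yb k)) i 0) 0) ->
  (* correction step w^{k+1} = w^k - M_k (w^k - wbar^k) *)
  (forall k, wvec (xs k.+1) (ys k.+1) (ls k.+1) =
     wvec (xs k) (ys k) (ls k)
     - Mmat (eta k) (r k) (jac phi (xb k)) (jac psi (yb k))
       *m (wvec (xs k) (ys k) (ls k) - wvec (xb k) (yb k) (lb k))) ->
  forall k,
    let Mk := Mmat (eta k) (r k) (jac phi (xb k)) (jac psi (yb k)) in
    let Qk := Qmat (eta k) (r k) (s k) (jac phi (xb k)) (jac psi (yb k)) in
    let Hk := Hmat n m p (r k) (s k) in
    let Gk := Gmat (eta k) (r k) (s k) (jac phi (xb k)) (jac psi (yb k)) in
    let wk := wvec (xs k) (ys k) (ls k) in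
    let wk1 := wvec (xs k.+1) (ys k.+1) (ls k.+1) in
    let wbk := wvec (xb k) (yb k) (lb k) in
    Mk \in unitmx /\ Qk *m invmx Mk = Hk /\ posdef Hk /\
    Qk^T + Qk - Mk^T *m Hk *m Mk = Gk /\ posdef Gk /\
        (forall x y l, X x -> Y y -> nonneg l ->
          let w := wvec x y l in
          rho * ((f x + g y) - (f (xb k) + g (yb k)))
            + ((w - wbk)^T *m ((eta k)^-1
                 *: Gamma phi psi (xb k) (yb k) (lb k))) 0 0
          >= 1 / 2 * (qf Hk (w - wk1) - qf Hk (w - wk))
             + 1 / 2 * qf Gk (wbk - wk)).
Proof.
move=> _ _ convX _ _ convY convf convg [_ [dphi _]] [_ [dpsi _]] rho_gt0 mu_gt1 eta_gt0
  _ _ _ Ru_gt0 Rb_gt0 r s xb_min yb_min lbE step k Mk Qk Hk Gk wk wk1 wbk.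
have eta_k_gt0 := eta_gt0 k.
have sqrtRu_gt0 : 0 < Num.sqrt (Rfun phi psi (xs k) (ys k)) by rewrite sqrtr_gt0.
have r_gt0 : 0 < r k by rewrite mulr_gt0 ?invr_gt0.
have s_gt0 : 0 < s k by rewrite divr_gt0 ?mulr_gt0 // (lt_trans ltr01 mu_gt1).
have QHM : Qk = Hk *m Mk by apply: Qmat_HM; rewrite gt_eqF.
have Hpd : posdef Hk by exact: Hmat_posdef.
have Munit : Mk \in unitmx by exact: Mmat_unit.
have GE : Qk^T + Qk - Mk^T *m Hk *m Mk = Gk by apply: Gmat_correction; rewrite gt_eqF.
split=> //; split; first by rewrite QHM mulmxK.
do 3 split=> //.
  apply: Gmat_posdef => //.
  exact: spice_dual_step_large eta_k_gt0 mu_gt1 (Ru_gt0 k) (Rb_gt0 k).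
move=> x y l Xx Yy l_ge0; cbv zeta; set w := wvec x y l.
rewrite /wk1 step -/wk -GE QHM correction_step_identity ?Hpd.1 // -QHM.
rewrite -/(dot (w - wbk) _) /w /wk /wbk !wvecB Qmat_mul /Gamma wvecZ !dot_wvec.
have := primal_step_residual (jac phi (xb k)) (eta k)^-1 (r k) x (xb k) (xs k) (ls k) (lb k).
have := primal_step_residual (jac psi (yb k)) (eta k)^-1 (r k) y (yb k) (ys k) (ls k) (lb k).
have := linearized_prox_vi convX convf (dphi^~ (xb k)) (ltW rho_gt0) (xb_min k).1
  (xb_min k).2 Xx.
have := linearized_prox_vi convY convg (dpsi^~ (yb k)) (ltW rho_gt0) (yb_min k).1
  (yb_min k).2 Yy.
have := dual_step_vi eta_k_gt0 s_gt0 l_ge0 (lbE k).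
rewrite [dot _ (s k *: _)]dotZr; lra.
Qed.
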